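(* Let $n\ge 2$ and let $S=\{A_1,\dots,A_m\}$ be a finite set of real $n\times n$ matrices such that every $A\in S$ satisfies $A\mathbf{1}=\mathbf{1}$ and $\|Ax\|_{\mathcal{P}}\le\|x\|_{\mathcal{P}}$ for all $x$. Then the switched system $x(t+1)=A_{\sigma(t)}x(t)$ converges to a multiple of $\mathbf{1}$ for every initial condition $x(0)=x_0\in\mathbb{R}^n$ and every sequence $\sigma:\mathbb{N}\to\{1,\dots,m\}$ if and only if the self-loop of node 1 is the only cycle in the graph of faces $\mathcal{G}$ of $S$.
   Context: $\mathbf{1}=(1,\dots,1)^\top$, $\|x\|_{\mathcal{P}}=\tfrac12(\max_i x_i-\min_i x_i)$, $\mathcal{P}=\{x:\|x\|_{\mathcal{P}}\le 1\}$, which satisfies $\mathcal{P}=-\mathcal{P}$. A face of a polyhedron $\mathcal{Q}$ is a non-empty subset $F$ with $F=\mathcal{Q}$ or $F=\mathcal{Q}\cap\{x:b^\top x=c\}$ where $b^\top x\le c$ on $\mathcal{Q}$; an open face is the relative interior of a face; a proper open face is the relative interior of a face other than $\mathcal{Q}$. If $F$ is a proper open face of $\mathcal{P}$, so is $-F$, and $\pm F$ denotes $F\cup(-F)$. The graph of faces $\mathcal{G}$ is the directed graph with one node for each pair $\{F,-F\}$ of opposite proper open faces of $\mathcal{P}$ and one additional node, ''node 1'', representing $\operatorname{int}(\mathcal{P})$; there is an edge from the node of $F_i$ to the node of $F_j$ whenever some $A\in S$ satisfies $AF_i\subseteq\pm F_j$ (self-loops allowed), an edge from the node of $F_i$ to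 node 1 whenever some $A\in S$ satisfies $AF_i\subseteq\operatorname{int}(\mathcal{P})$, and a self-loop at node 1. *)

From HB Require Import structures.
From mathcomp Require Import all_boot all_order all_algebra.
From mathcomp Require Import all_classical all_reals all_analysis.
Import numFieldNormedType.Exports.
Set Implicit Arguments. Unset Strict Implicit. Unset Printing Implicit Defensive.
Import Order.TTheory GRing.Theory Num.Theory.
Local Open Scope classical_set_scope.
Local Open Scope ring_scope.

Section Defs.
Variables (R : realType) (n : nat).
Notation vec := 'cV[R]_n.

Definition ones : vec := const_mx 1.

(* ||x||_P = (max_i x_i - min_i x_i)/2, written as (max_{i,j} (x_i - x_j))/2 *)
Definition pnorm (x : vec) : R :=
  (\big[Num.max/0]_(i < n) \big[Num.max/0]_(j < n) (x i 0 - x j 0)) / 2.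

Definition Pset : set vec := [set x | pnorm x <= 1].

Definition dotv (b x : vec) : R := \sum_(i < n) b i 0 * x i 0.

Definition is_face (Q F : set vec) : Prop :=
  (exists x, F x) /\
  (F = Q \/ exists (b : vec) (c : R),
      (forall x, Q x -> dotv b x <= c) /\ F = Q `&` [set x | dotv b x = c]).

Definition aff_hull (F : set vec) : set vec :=
  [set y | exists (k : nat) (lam : 'I_k -> R) (pts : 'I_k -> vec),
      (forall i, F (pts i)) /\ \sum_(i < k) lam i = 1 /\
      y = \sum_(i < k) lam i *: pts i].

Definition near_by (x y : vec) (e : R) : Prop := forall i, `|y i 0 - x i 0| < e.

Definition rel_interior (F : set vec) : set vec :=
  [set x | F x /\ exists e : R, 0 < e /\
     forall y, aff_hull F y -> near_by x y e -> F y].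

Definition interior_v (F : set vec) : set vec :=
  [set x | F x /\ exists e : R, 0 < e /\ forall y, near_by x y e -> F y].

Definition proper_open_face (G : set vec) : Prop :=
  exists F, is_face Pset F /\ F <> Pset /\ G = rel_interior F.

Definition negset (F : set vec) : set vec := [set x | F (- x)].
Definition pmset (F : set vec) : set vec := F `|` negset F.
Definition mimage (A : 'M[R]_n) (F : set vec) : set vec := [set A *m x | x in F].

Definition gnode := set (set vec).
Definition face_node (F : set vec) : gnode := [set F; negset F].
Definition node1 : gnode := [set interior_v Pset].

Definition is_gnode (N : gnode) : Prop :=
  N = node1 \/ exists F, proper_open_face F /\ N = face_node F.

Definition gedge (m : nat) (S : 'I_m -> 'M[R]_n) (N1 N2 : gnode) : Prop :=
  (exists Fi Fj, proper_open_face Fi /\ proper_open_face Fj /\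
     N1 = face_node Fi /\ N2 = face_node Fj /\
     exists k, mimage (S k) Fi `<=` pmset Fj)
  \/ (exists Fi, proper_open_face Fi /\ N1 = face_node Fi /\ N2 = node1 /\
     exists k, mimage (S k) Fi `<=` interior_v Pset)
  \/ (N1 = node1 /\ N2 = node1).

Definition is_cycle (m : nat) (S : 'I_m -> 'M[R]_n) (s : seq gnode) : Prop :=
  (0 < size s)%N /\
  (forall i, (i < size s)%N -> is_gnode (nth node1 s i)) /\
  (forall i j, (i < size s)%N -> (j < size s)%N ->
      nth node1 s i = nth node1 s j -> i = j) /\
  (forall i, (i < size s)%N ->
      gedge S (nth node1 s i) (nth node1 s ((i.+1) %% size s))).

Definition only_cycle_is_node1_loop (m : nat) (S : 'I_m -> 'M[R]_n) : Prop :=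
  forall s, is_cycle S s -> s = [:: node1].

Fixpoint traj (m : nat) (S : 'I_m -> 'M[R]_n) (sigma : nat -> 'I_m) (x0 : vec)
    (t : nat) : vec :=
  match t with
  | O => x0
  | t'.+1 => S (sigma t') *m traj S sigma x0 t'
  end.

Definition converges_to_multiple_of_ones (x : nat -> vec) : Prop :=
  exists c : R, forall i : 'I_n, (fun t => x t i 0) @ \oo --> c.

End Defs.

(* A point x of P lies in the open face determined by its set of tight pairs
   {(i, j) | x_i - x_j = 2}; interior points have none.  If A fixes 1 and does
   not expand the P-norm, extrapolating between two points x, y with the same
   tight pairs shows that A x and A y again have equal tight pairs: A maps open
   faces into open faces, which is what the edges of the graph of faces record.

   If the self-loop of node 1 is the only cycle, a trajectory started in P
   loses all tight pairs within K steps, K the number of possible tight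
   patterns: otherwise a pattern repeats while all are nonempty, and the faces
   visited in between form a cycle.  The P-norm of a matrix fixing 1
   is attained at the vertices 2 1_I of P, so the finitely many products of K
   matrices of S all have P-norm at most some rho < 1, the P-norm of the state
   decays geometrically, and every coordinate is a Cauchy sequence; their limits
   agree because the spread of the state tends to 0.

   Conversely, a cycle avoiding node 1 gives a periodic switching signal under
   which a trajectory started in a face stays on the boundary of P, keeping a
   spread of 2. *)

From mathcomp Require Import all_boot all_order all_algebra.
From mathcomp Require Import all_classical all_reals all_analysis.
From mathcomp Require Import ring lra zify.
Import Order.TTheory GRing.Theory Num.Theory numFieldNormedType.Exports.
Local Open Scope classical_set_scope.
Local Open Scope ring_scope.
Set Implicit Arguments. Unset Strict Implicit. Unset Printing Implicit Defensive.

Section PNorm.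
Variables (R : realType) (n : nat).
Implicit Types x y z : 'cV[R]_n.

Lemma pnorm_leP x r : 0 <= r ->
  pnorm x <= r <-> forall i j, x i 0 - x j 0 <= 2 * r.
Proof.
move=> r0; rewrite /pnorm ler_pdivrMr // [r * 2]mulrC; split.
- move=> /bigmax_leP [_ H] i j; have /bigmax_leP [_] := H i isT; exact.
- move=> H; apply/bigmax_leP; split; first by rewrite mulr_ge0.
  move=> i _; apply/bigmax_leP; split; first by rewrite mulr_ge0.
  by move=> j _; exact: H.
Qed.

Lemma pnorm_ltP x r : 0 < r ->
  pnorm x < r <-> forall i j, x i 0 - x j 0 < 2 * r.
Proof.
move=> r0; rewrite /pnorm ltr_pdivrMr // [r * 2]mulrC; split.
- move=> /bigmax_ltP [_ H] i j; have /bigmax_ltP [_] := H i isT; exact.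
- move=> H; apply/bigmax_ltP; split; first by rewrite mulr_gt0.
  move=> i _; apply/bigmax_ltP; split; first by rewrite mulr_gt0.
  by move=> j _; exact: H.
Qed.

Lemma pnorm_ge0 x : 0 <= pnorm x.
Proof. by rewrite /pnorm divr_ge0 //; exact: bigmax_ge_id. Qed.

Lemma pnorm_diff x i j : x i 0 - x j 0 <= 2 * pnorm x.
Proof. by move: i j; apply/pnorm_leP; [exact: pnorm_ge0|]. Qed.

Lemma norm_diff_le_pnorm x i j : `|x i 0 - x j 0| <= 2 * pnorm x.
Proof.
rewrite ler_norml pnorm_diff andbT lerNl opprB; exact: pnorm_diff.
Qed.

Definition inP x := forall i j, x i 0 - x j 0 <= 2.

Lemma PsetP x : Pset x <-> inP x.
Proof. by rewrite /Pset /inP /= (pnorm_leP x ler01) mulr1. Qed.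

Lemma pnorm_lt1P x : pnorm x < 1 <-> forall i j, x i 0 - x j 0 < 2.
Proof. by rewrite (pnorm_ltP x ltr01) mulr1. Qed.

Definition tight x : {set 'I_n * 'I_n} := [set p | x p.1 0 - x p.2 0 == 2].

Lemma tightE x i j : ((i, j) \in tight x) = (x i 0 - x j 0 == 2).
Proof. by rewrite inE. Qed.

Lemma tight_diff x i j : (i, j) \in tight x -> x i 0 - x j 0 = 2.
Proof. by rewrite tightE => /eqP. Qed.

Lemma tight_eq0P x : inP x -> tight x = finset.set0 <-> pnorm x < 1.
Proof.
move=> xP; rewrite pnorm_lt1P; split => [t0 i j|lt2].
  rewrite lt_neqAle xP andbT; apply/negP => /eqP h.
  have : (i, j) \in tight x by rewrite tightE h.
  by rewrite t0 inE.
apply/setP => -[i j]; rewrite tightE inE; apply/negP => /eqP e.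
by have := lt2 i j; rewrite e ltxx.
Qed.

Lemma nontight_margin x : inP x -> exists a, [/\ 0 <= a, a < 2 &
  forall i j, (i, j) \notin tight x -> x i 0 - x j 0 <= a].
Proof.
move=> xP; exists (\big[Num.max/0]_(i < n)
    \big[Num.max/0]_(j < n | (i, j) \notin tight x) (x i 0 - x j 0)).
split; first exact: bigmax_ge_id.
- apply/bigmax_ltP; split => // i _; apply/bigmax_ltP; split => // j.
  rewrite tightE => /eqP ne2; rewrite lt_neqAle xP andbT; exact/eqP.
- move=> i j ij; apply: le_trans (le_bigmax _ _ i); exact: (bigmax_sup j).
Qed.

Lemma nontight_slack x : inP x -> exists2 e : R, 0 < e & forall y, near_by x y e ->
  forall i j, (i, j) \notin tight x -> y i 0 - y j 0 < 2.
Proof.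
move=> /nontight_margin [a [_ a2 Ha]].
exists ((2 - a) / 2); first by apply: divr_gt0; lra.
move=> y xy i j ij; have := Ha _ _ ij; have := xy i; have := xy j.
rewrite !ltr_norml => /andP [? ?] /andP [? ?] ?; lra.
Qed.

Lemma lincomb_coord (a b : R) x y i :
  (a *: x - b *: y) i 0 = a * x i 0 - b * y i 0.
Proof. by rewrite !mxE. Qed.

(* Extrapolating [y] beyond [z] stays in P: the pairs tight for [y] are tight
   for [z] too, and the other pairs of [y] have slack. *)
Lemma extrapolate_inP y z : inP y -> inP z -> {subset tight y <= tight z} ->
  exists2 t : R, 0 < t & inP ((1 + t) *: y - t *: z).
Proof.
move=> yP zP yz; have [a [a0 a2 Ha]] := nontight_margin yP.
set t := (2 - a) / (2 + a).
have t0 : 0 < t by apply: divr_gt0; lra.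
have ht : t * (2 + a) = 2 - a by rewrite /t mulfVK //; apply/eqP; lra.
exists t => // k l; rewrite !lincomb_coord.
have -> : (1 + t) * y k 0 - t * z k 0 - ((1 + t) * y l 0 - t * z l 0) =
    (1 + t) * (y k 0 - y l 0) + t * (z l 0 - z k 0) by ring.
have [kl|kl] := boolP ((k, l) \in tight y).
  by rewrite (tight_diff kl) -opprB (tight_diff (yz _ kl)); lra.
have h1 : (1 + t) * (y k 0 - y l 0) <= (1 + t) * a.
  by apply: ler_wpM2l; [lra|exact: Ha].
have h2 : t * (z l 0 - z k 0) <= t * 2.
  by apply: ler_wpM2l; [lra|exact: zP].
lra.
Qed.

End PNorm.

Section Faces.
Variables (R : realType) (n : nat).
Implicit Types (b x y z u v : 'cV[R]_n) (F G : set 'cV[R]_n).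
Local Notation PS := (@Pset R n).

Lemma dotvD b u v : dotv b (u + v) = dotv b u + dotv b v.
Proof. by rewrite /dotv -big_split; apply: eq_bigr => i _; rewrite mxE mulrDr. Qed.

Lemma dotvZ b a u : dotv b (a *: u) = a * dotv b u.
Proof. by rewrite /dotv mulr_sumr; apply: eq_bigr => i _; rewrite mxE mulrCA. Qed.

Lemma dotv_sum b k (lam : 'I_k -> R) pts :
  dotv b (\sum_(l < k) lam l *: pts l) = \sum_(l < k) lam l * dotv b (pts l).
Proof.
elim/big_rec2: _ => [|l s v _ <-]; last by rewrite dotvD dotvZ.
by rewrite /dotv big1 // => i _; rewrite mxE mulr0.
Qed.

Lemma aff_hull_affine F (f : 'cV[R]_n -> R) c y :
  (forall k (lam : 'I_k -> R) pts,
     f (\sum_(l < k) lam l *: pts l) = \sum_(l < k) lam l * f (pts l)) ->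
  (forall p, F p -> f p = c) -> aff_hull F y -> f y = c.
Proof.
move=> f_aff Fc [k [lam [pts [Fpts [lam1 ->]]]]]; rewrite f_aff.
under eq_bigr => l _ do rewrite Fc //.
by rewrite -mulr_suml lam1 mul1r.
Qed.

Lemma aff_hull_diff F i j c y :
  (forall p, F p -> p i 0 - p j 0 = c) -> aff_hull F y -> y i 0 - y j 0 = c.
Proof.
apply: aff_hull_affine => k lam pts; rewrite !summxE -sumrB.
by apply: eq_bigr => l _; rewrite !mxE mulrBr.
Qed.

Lemma aff_hull_dotv F b c y :
  (forall p, F p -> dotv b p = c) -> aff_hull F y -> dotv b y = c.
Proof. by apply: aff_hull_affine => k lam pts; rewrite dotv_sum. Qed.

Lemma aff_hull_reflect F y u : F y -> F u -> aff_hull F (2 *: y - u).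
Proof.
move=> Fy Fu; exists 2%N, (fun l : 'I_2 => if l == ord0 then 2 else -1),
  (fun l : 'I_2 => if l == ord0 then y else u).
split; first by move=> l; case: ifP.
rewrite !big_ord_recl !big_ord0 /=; split; first by ring.
by rewrite addr0 scaleN1r.
Qed.

Definition Psection b (c : R) : set 'cV[R]_n := [set x | inP x /\ dotv b x = c].

Lemma proper_faceP F : is_face PS F -> F <> PS ->
  exists b c, (forall x, inP x -> dotv b x <= c) /\ F = Psection b c.
Proof.
move=> [_ [//|[b [c [bc ->]]]]] _; exists b, c; split=> [x /PsetP|]; first exact: bc.
by apply/seteqP; split=> x [/PsetP xP bx].
Qed.

Lemma Psection_full b c x : (forall y, inP y -> dotv b y <= c) ->
  Psection b c x -> pnorm x < 1 -> Psection b c = PS.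
Proof.
move=> bc [xP bx] /(tight_eq0P xP) x0; apply/seteqP; split=> y; first by case=> /PsetP.
move=> /PsetP yP; split=> //; apply/eqP; rewrite eq_le bc //=.
have [t t0 wP] : exists2 t : R, 0 < t & inP ((1 + t) *: x - t *: y).
  by apply: extrapolate_inP => // p; rewrite x0 inE.
have := bc _ wP; rewrite dotvD dotvZ -scaleNr dotvZ bx => h.
by rewrite -(ler_pM2l t0); lra.
Qed.

Lemma proper_face_tight F x : is_face PS F -> F <> PS -> F x ->
  inP x /\ tight x != finset.set0.
Proof.
move=> Fface FP Fx; have [b [c [bc eF]]] := proper_faceP Fface FP.
have [xP _] : Psection b c x by rewrite -eF.
split=> //; apply/eqP => /(tight_eq0P xP) x1; apply: FP.
by rewrite eF; apply: (Psection_full bc) x1; rewrite -eF.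
Qed.

Lemma open_face_tight G x : proper_open_face G -> G x ->
  inP x /\ tight x != finset.set0.
Proof. by move=> [F [Fface [FP ->]]] [Fx _]; exact: proper_face_tight Fface FP Fx. Qed.

Lemma tight_minimal F x0 : F x0 ->
  (forall x z, F x -> F z ->
     exists2 w, F w & {subset tight w <= [predI tight x & tight z]}) ->
  exists2 x, F x & forall z, F z -> {subset tight x <= tight z}.
Proof.
move=> Fx0 mid.
pose P k := `[< exists2 x, F x & #|tight x| = k >].
have exP : exists k, P k by exists #|tight x0|; apply/asboolP; exists x0.
have [k /asboolP [x Fx xk] kmin] := ex_minnP exP.
exists x => // z Fz p px; apply/contraT => pz.
have [w Fw wxz] := mid x z Fx Fz.
have : (#|tight w| < #|tight x|)%N.
  apply: fintype.proper_card; apply/fintype.properP; split.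
    by apply/fintype.subsetP => q /wxz /andP [].
  by exists p => //; apply: contra pz => /wxz /andP [].
by rewrite xk ltnNge kmin //; apply/asboolP; exists w.
Qed.

Lemma Psection_midpoint b c x z : Psection b c x -> Psection b c z ->
  exists2 w, Psection b c w & {subset tight w <= [predI tight x & tight z]}.
Proof.
move=> [xP bx] [zP bz]; exists ((1 / 2) *: x + (1 / 2) *: z).
  split; last by rewrite dotvD !dotvZ bx bz; field.
  by move=> i j; rewrite !mxE; have := xP i j; have := zP i j; lra.
move=> [i j]; rewrite !inE /= !mxE => /eqP h.
have := xP i j; have := zP i j => h1 h2.
by apply/andP; split; apply/eqP; lra.
Qed.

Lemma Psection_relint b c x : Psection b c x ->
  (forall z, Psection b c z -> {subset tight x <= tight z}) ->
  rel_interior (Psection b c) x.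
Proof.
move=> [xP bx] xmin; split=> //; have [e e0 He] := nontight_slack xP.
exists e; split=> // y xy_aff xy_near; split; last first.
  by apply: aff_hull_dotv xy_aff => p [].
move=> i j; have [ij|ij] := boolP ((i, j) \in tight x); last exact/ltW/He.
suff -> : y i 0 - y j 0 = 2 by [].
by apply: aff_hull_diff xy_aff => p /xmin /(_ _ ij) /tight_diff.
Qed.

Lemma proper_open_face_nonempty G : proper_open_face G -> exists x, G x.
Proof.
move=> [F [Fface [FP ->]]]; have [b [c [_ eF]]] := proper_faceP Fface FP.
have [x0 Fx0] := Fface.1; rewrite eF in Fx0 *.
have [x Fx xmin] := tight_minimal Fx0 (@Psection_midpoint b c).
by exists x; exact: Psection_relint.
Qed.

Definition tight_face x : set 'cV[R]_n :=
  [set y | inP y /\ {subset tight x <= tight y}].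

Definition open_face x : set 'cV[R]_n := [set y | inP y /\ tight y = tight x].

Definition face_normal (T : {set 'I_n * 'I_n}) : 'cV[R]_n :=
  \sum_(p in T) (delta_mx p.1 0 - delta_mx p.2 0).

Lemma dotv_delta i y : dotv (delta_mx i 0) y = y i 0.
Proof.
rewrite /dotv (bigD1 i) //= big1 ?addr0; first by rewrite mxE !eqxx mul1r.
by move=> k /negbTE ki; rewrite mxE ki mul0r.
Qed.

Lemma dotv_face_normal T y :
  dotv (face_normal T) y = \sum_(p in T) (y p.1 0 - y p.2 0).
Proof.
rewrite /dotv /face_normal; under eq_bigr => i _ do rewrite summxE big_distrl /=.
rewrite exchange_big /=; apply: eq_bigr => p _.
rewrite -!dotv_delta /dotv -sumrB; apply: eq_bigr => i _; rewrite !mxE; ring.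
Qed.

Lemma face_normal_bound x y : inP y ->
  dotv (face_normal (tight x)) y <= 2 *+ #|tight x|.
Proof.
move=> yP; rewrite dotv_face_normal -sumr_const.
by apply: ler_sum => -[i j] _; exact: yP.
Qed.

Lemma tight_face_Psection x :
  tight_face x = Psection (face_normal (tight x)) (2 *+ #|tight x|).
Proof.
apply/seteqP; split=> y [yP yx]; split=> //.
  rewrite dotv_face_normal -sumr_const; apply: eq_bigr => -[i j] /yx.
  exact: tight_diff.
have slack0 : \sum_(p in tight x) (2 - (y p.1 0 - y p.2 0)) = 0.
  by rewrite sumrB sumr_const -dotv_face_normal yx subrr.
have slack_ge0 p : p \in tight x -> 0 <= 2 - (y p.1 0 - y p.2 0).
  by rewrite subr_ge0 => _; exact: yP.
move=> [i j] /(psumr_eq0P slack_ge0 slack0) /= /eqP.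
by rewrite tightE subr_eq0 eq_sym.
Qed.

Lemma tight_face_proper x : inP x -> tight x != finset.set0 ->
  is_face PS (tight_face x) /\ tight_face x <> PS.
Proof.
move=> xP /finset.set0Pn [[i j] ij]; split.
  split; first by exists x; split.
  right; exists (face_normal (tight x)), (2 *+ #|tight x|); split.
    by move=> y /PsetP; exact: face_normal_bound.
  by rewrite tight_face_Psection; apply/seteqP; split=> y [/PsetP].
move=> tfP; have : tight_face x 0 by rewrite tfP; apply/PsetP => k l; rewrite !mxE subrr.
by move=> [_ /(_ _ ij) /tight_diff]; rewrite !mxE subrr; lra.
Qed.

Definition nudge y k (r : R) : 'cV[R]_n := y + r *: delta_mx k 0.

Lemma nudgeE y k r i : nudge y k r i 0 = y i 0 + (if i == k then r else 0).
Proof. by rewrite !mxE eqxx andbT; case: eqP; rewrite ?mulr1 ?mulr0. Qed.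

Lemma relint_nudge G y k r e :
  (forall z, aff_hull G z -> near_by y z e -> G z) -> G y ->
  G (nudge y k r) -> `|r| < e -> G (nudge y k (- r)).
Proof.
move=> He Gy Gyr re; apply: He; last first.
  move=> i; rewrite nudgeE addrC addKr; case: ifP => _; rewrite ?normrN //.
  by rewrite normr0 (le_lt_trans _ re).
have -> : nudge y k (- r) = 2 *: y - nudge y k r by apply/matrixP => i j; rewrite !mxE; ring.
exact: aff_hull_reflect.
Qed.

Lemma nudge_min_inP y k d : inP y -> (forall j, y k 0 <= y j 0) -> 0 <= d <= 2 ->
  inP (nudge y k d).
Proof.
move=> yP ymin /andP [d0 d2] i j; rewrite !nudgeE; have := yP i j.
by have := ymin i; have := ymin j; do 2 case: eqP => [->|_]; lra.
Qed.

Lemma nudge_max_inP y k d : inP y -> (forall j, y j 0 <= y k 0) -> 0 <= d <= 2 ->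
  inP (nudge y k (- d)).
Proof.
move=> yP ymax /andP [d0 d2] i j; rewrite !nudgeE; have := yP i j.
by have := ymax i; have := ymax j; do 2 case: eqP => [->|_]; lra.
Qed.

Lemma tight_face_nudge x y k r : tight_face x y ->
  (forall p, p \in tight x -> (p.1 != k) && (p.2 != k)) ->
  inP (nudge y k r) -> tight_face x (nudge y k r).
Proof.
move=> [_ xy] kfree yrP; split=> // -[i j] ij; have /andP [ik jk] := kfree _ ij.
by rewrite tightE !nudgeE (negbTE ik) (negbTE jk) !addr0 -tightE xy.
Qed.

(* A tight pair [(a, b)] of a relative interior point [y] must be tight for
   [x]: otherwise [a] or [b] is free in [tight x], and moving the extreme
   coordinate [y b] (or [y a]) both ways within [tight_face x] leaves P. *)
Lemma relint_tight_face_tight x y : inP x -> rel_interior (tight_face x) y ->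
  {subset tight y <= tight x}.
Proof.
move=> xP [[yP xy] [e [e0 He]]] [a b] ab; apply/contraT => nab.
have hab := tight_diff ab.
have ymin j : y b 0 <= y j 0 by have := yP a j; lra.
have ymax i : y i 0 <= y a 0 by have := yP i b; lra.
set d := Num.min (e / 2) 1.
have d0 : 0 < d by rewrite lt_min ltr01 andbT divr_gt0.
have d_le1 : d <= 1 by rewrite ge_min lexx orbT.
have de : `|d| < e by rewrite gtr0_norm // gt_min; apply/orP; left; lra.
have tfy : tight_face x y by [].
have ba : (b == a) = false by apply/eqP => ba; move: hab; rewrite ba subrr; lra.
have [[c ac]|afree] := pselect (exists c, (a, c) \in tight x).
  have [[c' c'b]|bfree] := pselect (exists c', (c', b) \in tight x).
    case/negP: nab; rewrite tightE; apply/eqP.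
    have := tight_diff ac; have := tight_diff c'b; have := xP c' c; have := xP a b.
    lra.
  have Gb : tight_face x (nudge y b d).
    apply: tight_face_nudge => // [[i j] ij|]; last by apply: nudge_min_inP => //; lra.
    apply/andP; split; apply/eqP => /= jb; last by apply: bfree; exists i; rewrite -jb.
    by have := tight_diff (xy _ ij); rewrite jb; have := ymin j; lra.
  exfalso; have [/(_ a b)] := relint_nudge He tfy Gb de.
  by rewrite !nudgeE eqxx eq_sym ba; lra.
have Ga : tight_face x (nudge y a (- d)).
  apply: tight_face_nudge => // [[i j] ij|]; last by apply: nudge_max_inP => //; lra.
  apply/andP; split; apply/eqP => /= ja; first by apply: afree; exists j; rewrite -ja.
  by have := tight_diff (xy _ ij); rewrite ja; have := ymax i; lra.
have de' : `|- d| < e by rewrite normrN.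
exfalso; have [/(_ a b)] := relint_nudge He tfy Ga de'.
by rewrite !nudgeE eqxx ba opprK; lra.
Qed.

Lemma open_face_relint x : inP x -> open_face x = rel_interior (tight_face x).
Proof.
move=> xP; apply/seteqP; split=> y.
  move=> [yP yx]; split; first by split=> // p; rewrite yx.
  have [e e0 He] := nontight_slack yP; exists e; split=> // z z_aff z_near.
  split=> [i j|[i j] ij]; last first.
    rewrite tightE; apply/eqP.
    by apply: aff_hull_diff z_aff => q [_ /(_ _ ij) /tight_diff].
  have [ij|ij] := boolP ((i, j) \in tight y); last exact/ltW/He.
  suff -> : z i 0 - z j 0 = 2 by [].
  by apply: aff_hull_diff z_aff => q [_]; rewrite -yx => /(_ _ ij) /tight_diff.
move=> yrel; have [[yP xy] _] := yrel; split=> //.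
by apply/setP => p; apply/idP/idP => [/(relint_tight_face_tight xP yrel)|/xy].
Qed.

Lemma open_face_proper x : inP x -> tight x != finset.set0 ->
  proper_open_face (open_face x).
Proof.
move=> xP x0; have [tf_face tf_proper] := tight_face_proper xP x0.
by exists (tight_face x); split => //; split => //; exact: open_face_relint.
Qed.

End Faces.

Section Nodes.
Variables (R : realType) (n : nat).
Implicit Types (x y : 'cV[R]_n) (F G : set 'cV[R]_n).

Definition swap_pairs (T : {set 'I_n * 'I_n}) : {set 'I_n * 'I_n} :=
  [set p | (p.2, p.1) \in T].

Lemma swap_pairsK : involutive swap_pairs.
Proof. by move=> T; apply/setP => -[i j]; rewrite !inE. Qed.

Lemma tightN x : tight (- x) = swap_pairs (tight x).
Proof. by apply/setP => -[i j]; rewrite !inE /= !mxE; apply/eqP/eqP; lra. Qed.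

Lemma inPN x : inP (- x) <-> inP x.
Proof. by split=> xP i j; have := xP j i; rewrite ?mxE; lra. Qed.

Lemma negsetK : involutive (@negset R n).
Proof. by move=> F; apply/seteqP; split=> x; rewrite /negset /= opprK. Qed.

Lemma negset_open_face x : negset (open_face x) = open_face (- x).
Proof.
apply/seteqP; split=> y [/inPN yP yx]; split=> //.
  by rewrite tightN -yx tightN swap_pairsK.
by rewrite tightN yx tightN swap_pairsK.
Qed.

Lemma face_node_negset F : face_node (negset F) = face_node F.
Proof.
apply/seteqP; split=> G [->|->]; [right|left; rewrite negsetK|right; rewrite negsetK|left] => //.
Qed.

Lemma interior_pnorm_lt1 x : interior_v (@Pset R n) x -> pnorm x < 1.
Proof.
move=> [/PsetP xP [e [e0 He]]]; apply/pnorm_lt1P => i j.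
rewrite lt_neqAle xP andbT; apply/eqP => xij.
have ij : (j == i) = false by apply/eqP => ji; move: xij; rewrite ji subrr; lra.
have e2 : 0 < e / 2 by rewrite divr_gt0.
have /PsetP /(_ i j) : @Pset R n (nudge x i (e / 2)).
  apply: He => k; rewrite nudgeE addrC addKr.
  by case: ifP => _; rewrite ?normr0 // gtr0_norm //; lra.
by rewrite !nudgeE eqxx ij; lra.
Qed.

Lemma node1_neq_face_node G : proper_open_face G -> @node1 R n <> face_node G.
Proof.
move=> G_open node1G; have [x Gx] := proper_open_face_nonempty G_open.
have [xP /eqP] := open_face_tight G_open Gx; apply; apply/(tight_eq0P xP).
have /= GP : @node1 R n G by rewrite node1G; left.
by apply: interior_pnorm_lt1; rewrite -GP.
Qed.

Definition open_face_node x : gnode R n := face_node (open_face x).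

Definition tight_key x : {set {set 'I_n * 'I_n}} :=
  [set tight x; swap_pairs (tight x)].

Lemma tight_key_node x y : tight_key x = tight_key y ->
  open_face_node x = open_face_node y.
Proof.
move=> xy; have : tight y \in tight_key x by rewrite xy !inE eqxx.
rewrite !inE => /orP [/eqP yx|/eqP yx]; first by rewrite /open_face_node /open_face yx.
rewrite /open_face_node -face_node_negset negset_open_face /open_face.
by rewrite tightN yx.
Qed.

Lemma open_face_node_key x y : inP y -> open_face_node x = open_face_node y ->
  tight_key x = tight_key y.
Proof.
move=> yP xy; have : open_face_node x (open_face y) by rewrite xy; left.
have yy : open_face y y by [].
rewrite /tight_key; case=> yx; move: yy; rewrite yx ?negset_open_face => -[_ ->] //.
by rewrite tightN swap_pairsK; apply/setP => T; rewrite !inE orbC.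
Qed.

End Nodes.

Section Nonexpansive.
Variables (R : realType) (n : nat) (A : 'M[R]_n).
Hypothesis A_nonexp : forall x : 'cV[R]_n, pnorm (A *m x) <= pnorm x.
Implicit Types x y z : 'cV[R]_n.

Lemma inP_nonexp x : inP x -> inP (A *m x).
Proof. by move=> /PsetP xP; apply/PsetP; apply: le_trans (A_nonexp x) xP. Qed.

Lemma tight_eq0_nonexp x : inP x -> tight x = finset.set0 ->
  tight (A *m x) = finset.set0.
Proof.
move=> xP /(tight_eq0P xP) x1; apply/(tight_eq0P (inP_nonexp xP)).
exact: le_lt_trans (A_nonexp x) x1.
Qed.

(* [A] maps the extrapolation of [y] beyond [z] into P, which forces every
   pair tight for [A y] to be tight for [A z]. *)
Lemma tight_nonexp_sub y z : inP y -> inP z -> {subset tight y <= tight z} ->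
  {subset tight (A *m y) <= tight (A *m z)}.
Proof.
move=> yP zP yz [i j] /tight_diff Ay2.
have [t t0 /inP_nonexp /(_ i j)] := extrapolate_inP yP zP yz.
rewrite mulmxBr -!scalemxAr !lincomb_coord.
have -> : (1 + t) * (A *m y) i 0 - t * (A *m z) i 0 -
    ((1 + t) * (A *m y) j 0 - t * (A *m z) j 0) =
    (1 + t) * ((A *m y) i 0 - (A *m y) j 0) - t * ((A *m z) i 0 - (A *m z) j 0).
  by ring.
have Az_le2 := inP_nonexp zP i j.
by rewrite Ay2 tightE eq_le Az_le2 /= => h; rewrite -(ler_pM2l t0); lra.
Qed.

Lemma tight_nonexp y z : inP y -> inP z -> tight y = tight z ->
  tight (A *m y) = tight (A *m z).
Proof.
move=> yP zP yz; apply/setP => p.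
by apply/idP/idP; apply: tight_nonexp_sub => // q; rewrite yz.
Qed.

End Nonexpansive.

Lemma repeat_window (T : finType) (f : nat -> T) : exists t d,
  [/\ (0 < d)%N, (t + d <= #|T|)%N, f (t + d)%N = f t &
      forall i j, (i < d)%N -> (j < d)%N -> f (t + i)%N = f (t + j)%N -> i = j].
Proof.
have [i [j [/andP [ij jT] fij]]] : exists i j, (i < j <= #|T|)%N /\ f i = f j.
  have /injectivePn [i [j ij fij]] : ~~ injectiveb (fun i : 'I_#|T|.+1 => f i).
    by apply/injectiveP => /leq_card; rewrite card_ord ltnn.
  have [lt|gt|/val_inj eq] := ltngtP i j; last by rewrite eq eqxx in ij.
    by exists i, j; rewrite lt -ltnS ltn_ord.
  by exists j, i; rewrite gt -ltnS ltn_ord.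
pose P d := [exists t : 'I_#|T|.+1,
  [&& 0 < d, t + d <= #|T| & f (t + d) == f t]]%N.
have P_ji : P (j - i)%N.
  have iT : (i < #|T|.+1)%N by lia.
  apply/existsP; exists (Ordinal iT); rewrite /= subnKC ?(ltnW ij) // fij eqxx.
  by rewrite subn_gt0 ij jT.
have [d /existsP [t /and3P [d0 tdT /eqP ftd]] dmin] := ex_minnP (ex_intro P _ P_ji).
have no_short i' j' : (i' < j' < d)%N -> f (t + i')%N != f (t + j')%N.
  move=> /andP [ij' j'd]; apply/eqP => fij'.
  have t'T : (t + i' < #|T|.+1)%N by lia.
  have : P (j' - i')%N.
    apply/existsP; exists (Ordinal t'T) => /=.
    rewrite -addnA subnKC ?(ltnW ij') // fij' eqxx subn_gt0 ij' andbT /=.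
    by apply: leq_trans tdT; rewrite leq_add2l ltnW.
  by move/dmin; lia.
exists t, d; split=> // i' j' i'd j'd fij'.
have [lt|gt|//] := ltngtP i' j'.
  by move: (no_short i' j'); rewrite lt j'd fij' eqxx => /(_ isT).
by move: (no_short j' i'); rewrite gt i'd fij' eqxx => /(_ isT).
Qed.

Definition npatterns n : nat := #|{: {set {set 'I_n * 'I_n}}}|.

Section SwitchedFaces.
Variables (R : realType) (n m : nat) (S : 'I_m -> 'M[R]_n).
Hypothesis S_nonexp : forall k (x : 'cV[R]_n), pnorm (S k *m x) <= pnorm x.
Implicit Types (x y : 'cV[R]_n) (sigma : nat -> 'I_m).

Lemma traj_inP sigma x t : inP x -> inP (traj S sigma x t).
Proof. by move=> xP; elim: t => //= t IH; apply: inP_nonexp. Qed.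

Lemma traj_tight_eq0 sigma x t s : inP x ->
  tight (traj S sigma x t) = finset.set0 ->
  tight (traj S sigma x (t + s)%N) = finset.set0.
Proof.
move=> xP t0; elim: s => [|s IH]; first by rewrite addn0.
by rewrite addnS /=; apply: tight_eq0_nonexp => //; exact: traj_inP.
Qed.

Lemma gedge_open_face_node y k : inP y -> tight y != finset.set0 ->
  tight (S k *m y) != finset.set0 ->
  gedge S (open_face_node y) (open_face_node (S k *m y)).
Proof.
move=> yP y0 Sy0; left; exists (open_face y), (open_face (S k *m y)).
split; first exact: open_face_proper.
split; first by apply: open_face_proper => //; exact: inP_nonexp.
do 2 split=> //; exists k => _ [z [zP zy] <-]; left; split.
  exact: inP_nonexp.
exact: tight_nonexp.
Qed.

Lemma traj_window_cycle sigma x t d : inP x -> (0 < d)%N ->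
  (forall i, (i <= d)%N -> tight (traj S sigma x (t + i)%N) != finset.set0) ->
  tight_key (traj S sigma x (t + d)%N) = tight_key (traj S sigma x t) ->
  (forall i j, (i < d)%N -> (j < d)%N ->
     open_face_node (traj S sigma x (t + i)%N) =
     open_face_node (traj S sigma x (t + j)%N) -> i = j) ->
  is_cycle S [seq open_face_node (traj S sigma x (t + i)%N) | i <- iota 0 d].
Proof.
move=> xP d0 Xne period inj; set X := traj S sigma x.
set s := [seq open_face_node (X (t + i)%N) | i <- iota 0 d].
have nth_s i : (i < d)%N -> nth (@node1 R n) s i = open_face_node (X (t + i)%N).
  by move=> id; rewrite (nth_map 0%N) ?size_iota // nth_iota.
have nth_s_succ i : (i < d)%N ->
    nth (@node1 R n) s (i.+1 %% d) = open_face_node (X (t + i.+1)%N).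
  move=> id; have [i1d|di1] := ltnP i.+1 d; first by rewrite modn_small // nth_s.
  have -> : i.+1 = d by lia.
  by rewrite modnn nth_s // addn0 (tight_key_node period).
rewrite /is_cycle size_map size_iota; split=> //; split.
  move=> i id; rewrite nth_s //; right; exists (open_face (X (t + i)%N)); split=> //.
  by apply: open_face_proper; [exact: traj_inP | apply: Xne; exact: ltnW].
split; first by move=> i j id jd; rewrite !nth_s //; exact: inj.
move=> i id; rewrite nth_s // nth_s_succ // addnS /= -/X.
apply: gedge_open_face_node; first exact: traj_inP.
  by apply: Xne; exact: ltnW.
by have := Xne _ id; rewrite addnS.
Qed.

Hypothesis S_acyclic : only_cycle_is_node1_loop S.

(* Were the last tight set nonempty, so would be all earlier ones; some tight
   key then repeats, and the open faces visited in between form a cycle of the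
   graph of faces avoiding node 1. *)
Lemma traj_tight_empty sigma x : inP x ->
  tight (traj S sigma x (npatterns n)) = finset.set0.
Proof.
move=> xP; set X := traj S sigma x; apply/eqP/negPn/negP => XK.
have Xne t : (t <= npatterns n)%N -> tight (X t) != finset.set0.
  move=> tK; apply: contra XK => /eqP t0; apply/eqP.
  by rewrite -(subnKC tK); exact: traj_tight_eq0.
have [t [d [d0 tdK period inj]]] := repeat_window (fun t => tight_key (X t)).
have : is_cycle S [seq open_face_node (X (t + i)%N) | i <- iota 0 d].
  apply: traj_window_cycle => // [i id|i j id jd].
    by apply: Xne; apply: leq_trans tdK; rewrite leq_add2l.
  by move/open_face_node_key => /(_ (traj_inP _ _ xP)); exact: inj.
move/S_acyclic; case: d d0 tdK {period inj} => // d _ tdK [X_node1 _].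
have Xt_ne : tight (X (t + 0)%N) != finset.set0.
  by apply: Xne; rewrite addn0; apply: leq_trans tdK; exact: leq_addr.
apply: (node1_neq_face_node (open_face_proper (traj_inP _ _ xP) Xt_ne)).
by rewrite -X_node1.
Qed.

End SwitchedFaces.

Section StochasticMatrix.
Variables (R : realType) (n : nat).
Implicit Types x : 'cV[R]_n.

Lemma sum_mul_shift (a y : 'I_n -> R) c :
  \sum_k a k * y k = \sum_k a k * (y k - c) + (\sum_k a k) * c.
Proof.
by rewrite mulr_suml -big_split /=; apply: eq_bigr => k _; rewrite mulrBr subrK.
Qed.

Definition vertex (I : {set 'I_n}) : 'cV[R]_n := \col_i (if i \in I then 2 else 0).

Lemma vertex_inP I : inP (vertex I).
Proof. by move=> i j; rewrite !mxE; do 2 case: ifP => _; lra. Qed.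

Variable M : 'M[R]_n.
Hypothesis M_ones : M *m ones R n = ones R n.

Lemma row_sum_ones i : \sum_k M i k = 1.
Proof.
have := congr1 (fun v : 'cV[R]_n => v i 0) M_ones; rewrite !mxE => <-.
by apply: eq_bigr => k _; rewrite mxE mulr1.
Qed.

Lemma mulmx_ones_diff x c i j :
  (M *m x) i 0 - (M *m x) j 0 = \sum_k (M i k - M j k) * (x k 0 - c).
Proof.
rewrite !mxE -sumrB (eq_bigr (fun k => (M i k - M j k) * x k 0)); last first.
  by move=> k _; rewrite mulrBl.
by rewrite [LHS](sum_mul_shift _ _ c) sumrB !row_sum_ones subrr mul0r addr0.
Qed.

Lemma mulmx_ones_step x i :
  `|(M *m x) i 0 - x i 0| <= (\sum_k `|M i k|) * (2 * pnorm x).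
Proof.
rewrite mxE [X in X - _](sum_mul_shift _ _ (x i 0)) row_sum_ones mul1r addrK.
apply: le_trans (ler_norm_sum _ _ _) _; rewrite mulr_suml.
by apply: ler_sum => k _; rewrite normrM ler_wpM2l ?norm_diff_le_pnorm.
Qed.

(* Writing [(M x)_i - (M x)_j] as [sum_k (M i k - M j k) (x_k - min x)], the
   worst case puts [x_k - min x] at [2 pnorm x] exactly where the weight is
   positive, i.e. [x] is a multiple of the vertex [vertex I]. *)
Lemma pnorm_mulmx_vertex r : (forall I, pnorm (M *m vertex I) <= r) ->
  forall x, pnorm (M *m x) <= r * pnorm x.
Proof.
move=> Mr x; have r0 := le_trans (pnorm_ge0 _) (Mr finset.set0).
have px0 := pnorm_ge0 x.
apply/pnorm_leP; first exact: mulr_ge0.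
move=> i j; set mu := \big[Num.min/x i 0]_k x k 0.
have mu_le k : mu <= x k 0 by exact: bigmin_le.
have mu_ge k : x k 0 - 2 * pnorm x <= mu.
  apply/bigmin_geP; split=> [|l _].
    by have := pnorm_diff x k i; lra.
  by have := pnorm_diff x k l; lra.
set I := [set k | 0 < M i k - M j k]%SET.
have vI_diff := pnorm_diff (M *m vertex I) i j.
rewrite (mulmx_ones_diff _ 0) in vI_diff; rewrite (mulmx_ones_diff _ mu).
apply: (@le_trans _ _ (pnorm x * \sum_k (M i k - M j k) * (vertex I k 0 - 0))).
  rewrite mulr_sumr; apply: ler_sum => k _; rewrite subr0 mxE inE.
  have := mu_le k; have := mu_ge k.
  case: ltrP => dk h1 h2.
    by rewrite mulrCA; apply: ler_wpM2l; [exact: ltW|lra].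
  by rewrite mulr0 mulr0 mulr_le0_ge0 //; lra.
have := ler_wpM2l px0 (le_trans vI_diff (ler_wpM2l (ler0n _ 2) (Mr I))).
lra.
Qed.

End StochasticMatrix.

Section Contraction.
Variables (R : realType) (n m : nat) (S : 'I_m -> 'M[R]_n).
Hypothesis S_ones : forall k, S k *m ones R n = ones R n.
Hypothesis S_nonexp : forall k (x : 'cV[R]_n), pnorm (S k *m x) <= pnorm x.
Hypothesis S_acyclic : only_cycle_is_node1_loop S.
Variable k0 : 'I_m.
Implicit Types (x : 'cV[R]_n) (sigma : nat -> 'I_m).

Fixpoint switch_prod sigma t : 'M[R]_n :=
  if t is t'.+1 then S (sigma t') *m switch_prod sigma t' else 1%:M.

Lemma traj_switch_prod sigma x t : traj S sigma x t = switch_prod sigma t *m x.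
Proof. by elim: t => [|t IH] /=; rewrite ?mul1mx // IH mulmxA. Qed.

Lemma eq_switch_prod sigma sigma' t : {in gtn t, sigma =1 sigma'} ->
  switch_prod sigma t = switch_prod sigma' t.
Proof.
elim: t => //= t IH eq_sigma; rewrite eq_sigma ?inE // IH // => s.
by rewrite !inE => /ltnW; exact: eq_sigma.
Qed.

Lemma switch_prod_ones sigma t : switch_prod sigma t *m ones R n = ones R n.
Proof. by elim: t => [|t IH] /=; rewrite ?mul1mx // -mulmxA IH S_ones. Qed.

Local Notation K := (npatterns n).

Definition ffun_switch (f : {ffun 'I_K -> 'I_m}) (t : nat) : 'I_m :=
  odflt k0 (omap f (insub t)).

Definition contraction_rate : R :=
  \big[Num.max/0]_(f : {ffun 'I_K -> 'I_m}) \big[Num.max/0]_(I : {set 'I_n})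
     pnorm (switch_prod (ffun_switch f) K *m vertex R I).

Lemma contraction_rate_ge0 : 0 <= contraction_rate.
Proof. exact: bigmax_ge_id. Qed.

Lemma contraction_rate_lt1 : contraction_rate < 1.
Proof.
apply/bigmax_ltP; split=> // f _; apply/bigmax_ltP; split=> // I _.
have vP : inP (vertex R I) by exact: vertex_inP.
rewrite -traj_switch_prod.
by apply/(tight_eq0P (traj_inP S_nonexp _ _ vP)); exact: traj_tight_empty.
Qed.

Lemma traj_contract sigma x :
  pnorm (traj S sigma x K) <= contraction_rate * pnorm x.
Proof.
pose f := [ffun i : 'I_K => sigma i].
rewrite traj_switch_prod (@eq_switch_prod sigma (ffun_switch f)); last first.
  by move=> s; rewrite inE /ffun_switch => sK; rewrite insubT /= ffunE.
apply: pnorm_mulmx_vertex; first exact: switch_prod_ones.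
by move=> I; apply: (bigmax_sup f) => //; exact: (bigmax_sup I).
Qed.

Lemma traj_shift sigma x t s :
  traj S sigma x (t + s)%N =
  traj S (fun u => sigma (t + u)%N) (traj S sigma x t) s.
Proof. by elim: s => [|s IH]; rewrite ?addn0 // addnS /= IH. Qed.

End Contraction.

Section GeometricDecay.
Variables (R : realType) (K : nat) (r : R) (q : nat -> R).
Hypotheses (K_gt0 : (0 < K)%N) (r_ge0 : 0 <= r) (r_lt1 : r < 1).
Hypotheses (q_ge0 : forall t, 0 <= q t) (q_noninc : forall t, q t.+1 <= q t).
Hypothesis q_contract : forall t, q (t + K)%N <= r * q t.

Lemma decay_le t s : q (t + s)%N <= q t.
Proof. by elim: s => [|s IH]; rewrite ?addn0 // addnS (le_trans (q_noninc _)). Qed.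

Lemma decay_pow k : q (k * K)%N <= r ^+ k * q 0.
Proof.
elim: k => [|k IH]; first by rewrite mul0n expr0 mul1r.
rewrite mulSn addnC exprS -mulrA; apply: le_trans (q_contract _) _.
exact: ler_wpM2l.
Qed.

Lemma decay_vanish e : 0 < e -> exists N, forall t, (N <= t)%N -> q t < e.
Proof.
move=> e0; have q00 := q_ge0 0.
have /cvgrPdist_lt /(_ (e / (q 0 + 1))) [|N _ HN] : (GRing.exp r : R^nat) @ \oo --> 0.
- by apply: cvg_expr; rewrite ger0_norm.
- by apply: divr_gt0 => //; lra.
exists (N * K)%N => t Nt; rewrite -(subnKC Nt); apply: le_lt_trans (decay_le _ _) _.
apply: le_lt_trans (decay_pow _) _.
have := HN N (leqnn N); rewrite /= sub0r normrN ger0_norm ?exprn_ge0 // => rN.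
have : r ^+ N * (q 0 + 1) < e by rewrite -ltr_pdivlMr //; lra.
have : r ^+ N * q 0 <= r ^+ N * (q 0 + 1) by rewrite ler_wpM2l ?exprn_ge0 //; lra.
lra.
Qed.

Variables (C : R) (u : nat -> R).
Hypotheses (C_ge0 : 0 <= C) (u_step : forall t, `|u t.+1 - u t| <= C * q t).

Lemma drift_linear L t : `|u (t + L)%N - u t| <= L%:R * C * q t.
Proof.
elim: L => [|L IH]; first by rewrite addn0 subrr normr0 !mul0r.
have -> : u (t + L.+1)%N - u t = (u (t + L).+1 - u (t + L)%N) + (u (t + L)%N - u t).
  by rewrite addnS; ring.
apply: le_trans (ler_normD _ _) _; have := u_step (t + L)%N.
have : C * q (t + L)%N <= C * q t by rewrite ler_wpM2l // decay_le.
rewrite -natr1 !mulrDl mul1r; lra.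
Qed.

(* Each block of [K] steps drifts by at most [K C q t] and shrinks [q] by [r],
   so the total drift is a geometric series. *)
Lemma drift_bounded L t : `|u (t + L)%N - u t| <= K%:R * C / (1 - r) * q t.
Proof.
set D := K%:R * C / (1 - r).
have KC0 : 0 <= K%:R * C by rewrite mulr_ge0.
have D0 : 0 <= D by apply: divr_ge0 => //; rewrite subr_ge0 ltW.
have Dr : 0 <= D * r by rewrite mulr_ge0.
have DK : D * r + K%:R * C = D by rewrite /D; field; rewrite subr_eq0 gt_eqF.
elim/ltn_ind: L t => L IH t; have qt := q_ge0 t.
have [LK|KL] := leqP L K.
  apply: le_trans (drift_linear L t) _; rewrite ler_wpM2r //.
  by apply: (@le_trans _ _ (K%:R * C)); [rewrite ler_wpM2r // ler_nat | lra].
have -> : (t + L = (t + K) + (L - K))%N by rewrite -addnA subnKC // ltnW.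
have LK_lt : (L - K < L)%N by rewrite ltn_subrL K_gt0 (ltn_trans K_gt0 KL).
have := IH _ LK_lt (t + K)%N; have := drift_linear K t.
have : D * q (t + K)%N <= D * (r * q t) by rewrite ler_wpM2l.
have -> : u (t + K + (L - K))%N - u t =
    (u (t + K + (L - K))%N - u (t + K)%N) + (u (t + K)%N - u t) by ring.
move=> h1 h2 h3; apply: le_trans (ler_normD _ _) _.
have : D * (r * q t) + K%:R * C * q t = D * q t by rewrite -[in RHS]DK; ring.
lra.
Qed.

Lemma drift_cvg : cvg (u @ \oo).
Proof.
set D := K%:R * C / (1 - r).
have D0 : 0 <= D by apply: divr_ge0; [rewrite mulr_ge0 | rewrite subr_ge0 ltW].
apply/cauchy_cvgP/cauchy_exP => e e0.
have [N HN] := decay_vanish (divr_gt0 e0 (ltr_wpDl D0 ltr01)).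
exists (u N); apply: filterS (nbhs_infty_ge N) => t Nt.
rewrite -ball_normE /ball_ /=.
have := drift_bounded (t - N) N; rewrite subnKC // distrC -/D => h.
apply: le_lt_trans h _; have qN := HN N (leqnn N).
have : D * q N <= D * (e / (D + 1)) by rewrite ler_wpM2l // ltW.
have : D * (e / (D + 1)) < e by rewrite mulrA ltr_pdivrMr; lra.
lra.
Qed.

End GeometricDecay.

Section Convergence.
Variables (R : realType) (n m : nat) (S : 'I_m -> 'M[R]_n).
Hypothesis S_ones : forall k, S k *m ones R n = ones R n.
Hypothesis S_nonexp : forall k (x : 'cV[R]_n), pnorm (S k *m x) <= pnorm x.
Hypothesis S_acyclic : only_cycle_is_node1_loop S.
Variables (sigma : nat -> 'I_m) (x : 'cV[R]_n).

Let X := traj S sigma x.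
Let q t := pnorm (X t).
Let r := contraction_rate S (sigma 0%N).
Let C := 2 * \big[Num.max/0]_(k : 'I_m) \big[Num.max/0]_(i : 'I_n) \sum_j `|S k i j|.

Lemma npatterns_gt0 : (0 < npatterns n)%N.
Proof. by apply/card_gt0P; exists finset.set0. Qed.

Lemma traj_pnorm_contract t : q (t + npatterns n)%N <= r * q t.
Proof. by rewrite /q /X traj_shift; exact: traj_contract. Qed.

Lemma traj_coord_step t i : `|X t.+1 i 0 - X t i 0| <= C * q t.
Proof.
apply: le_trans (mulmx_ones_step (S_ones (sigma t)) _ i) _.
rewrite mulrA [_ * 2]mulrC; apply: ler_wpM2r; first exact: pnorm_ge0.
apply: ler_wpM2l => //; apply: (bigmax_sup (sigma t)) => //; exact: (bigmax_sup i).
Qed.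

Lemma traj_pnorm_vanish e : 0 < e -> exists N, forall t, (N <= t)%N -> q t < e.
Proof.
apply: (@decay_vanish _ (npatterns n) r) => [||t|t|t].
- exact: contraction_rate_ge0.
- exact: contraction_rate_lt1.
- exact: pnorm_ge0.
- exact: S_nonexp.
- exact: traj_pnorm_contract.
Qed.

Lemma traj_coord_cvg i : cvg ((fun t => X t i 0) @ \oo).
Proof.
apply: (@drift_cvg _ (npatterns n) r q _ _ _ _ _ _ C) => [|||t|t|t||t].
- exact: npatterns_gt0.
- exact: contraction_rate_ge0.
- exact: contraction_rate_lt1.
- exact: pnorm_ge0.
- exact: S_nonexp.
- exact: traj_pnorm_contract.
- by rewrite mulr_ge0 //; exact: bigmax_ge_id.
- exact: traj_coord_step.
Qed.

Lemma traj_converges (i0 : 'I_n) : converges_to_multiple_of_ones X.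
Proof.
exists (lim ((fun t => X t i0 0) @ \oo)) => i.
have Xi0 : cvg ((fun t => X t i0 0) @ \oo) by exact: traj_coord_cvg.
set c := lim _ in Xi0 *.
apply/cvgrPdist_lt => e e0.
have [N HN] := traj_pnorm_vanish (divr_gt0 e0 (ltr0n _ 4)).
near=> t.
have : `|c - X t i0 0| < e / 2.
  by near: t; apply: (cvgrPdist_lt _ _).1 Xi0 _ (divr_gt0 e0 (ltr0n _ 2)).
have : q t < e / 4 by apply: HN; near: t; exact: nbhs_infty_ge.
have := norm_diff_le_pnorm (X t) i0 i.
have := ler_normD (c - X t i0 0) (X t i0 0 - X t i 0).
rewrite (_ : c - X t i0 0 + _ = c - X t i 0); last by ring.
rewrite /q; lra.
Unshelve. all: by end_near.
Qed.

End Convergence.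

Lemma spread_not_converge (R : realType) n (X : nat -> 'cV[R]_n) :
  (forall t, exists i j, X t i 0 - X t j 0 = 2) ->
  ~ converges_to_multiple_of_ones X.
Proof.
move=> X2 [c Xc].
have : \forall t \near \oo, forall i, `|c - X t i 0| < 1 / 2.
  by apply: filter_forall => i; move/cvgrPdist_lt: (Xc i); apply; exact: divr_gt0.
move=> /filter_ex [t Xt]; have [i [j Xij]] := X2 t.
by have := Xt i; have := Xt j; rewrite !ltr_norml => /andP [? ?] /andP [? ?]; lra.
Qed.

Section Converse.
Variables (R : realType) (n m : nat) (S : 'I_m -> 'M[R]_n).
Implicit Types (N : gnode R n) (y : 'cV[R]_n).

Definition in_node N y := exists2 G, N G & G y.

Lemma gedge_from_node1 N : gedge S (@node1 R n) N -> N = @node1 R n.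
Proof.
case=> [[F [_ [F_open [_ [F1 _]]]]]|[[F [F_open [F1 _]]]|[_ //]]];
  by have := node1_neq_face_node F_open.
Qed.

Lemma in_face_node_spread F y : proper_open_face F -> in_node (face_node F) y ->
  exists i j, y i 0 - y j 0 = 2.
Proof.
move=> F_open [G [->|->] Gy].
  by have [_ /finset.set0Pn [[i j] /tight_diff]] := open_face_tight F_open Gy; exists i, j.
have [_ /finset.set0Pn [[i j] /tight_diff]] := open_face_tight F_open Gy.
by rewrite !mxE => h; exists j, i; lra.
Qed.

Lemma gedge_in_node F1 F2 : proper_open_face F1 -> proper_open_face F2 ->
  gedge S (face_node F1) (face_node F2) ->
  exists k, forall y, in_node (face_node F1) y -> in_node (face_node F2) (S k *m y).
Proof.
move=> F1_open F2_open.
case=> [[G1 [G2 [G1_open [G2_open [E1 [E2 [k Gk]]]]]]]|[[G [_ [_ [E _]]]]|[E _]]];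
  last 2 first.
- by case: (node1_neq_face_node F2_open (esym E)).
- by case: (node1_neq_face_node F1_open (esym E)).
rewrite E1 E2; exists k => y [G [->|->] Gy].
  have [G2y|G2y] : pmset G2 (S k *m y) by apply: Gk; exists y.
    by exists G2; [left|].
  by exists (negset G2); [right|].
have [G2y|G2y] : pmset G2 (S k *m (- y)) by apply: Gk; exists (- y).
  by exists (negset G2); [right|rewrite /negset /= -mulmxN].
by exists G2; [left|move: G2y; rewrite /negset /= mulmxN opprK].
Qed.

Lemma cycle_through_node1 s i : is_cycle S s -> (i < size s)%N ->
  nth (@node1 R n) s i = @node1 R n -> s = [:: @node1 R n].
Proof.
move=> [s0 [_ [s_uniq s_edge]]] i_lt si.
have s_next : nth (@node1 R n) s (i.+1 %% size s) = @node1 R n.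
  by apply: gedge_from_node1; rewrite -[X in gedge _ X]si; exact: s_edge.
have : (i.+1 %% size s)%N = i by apply: s_uniq; rewrite ?ltn_pmod ?s_next ?si.
have [i1s|si1] := ltnP i.+1 (size s).
  by rewrite modn_small // => /eqP; rewrite eqn_leq ltnn.
have {}si1 : i.+1 = size s by apply/eqP; rewrite eqn_leq i_lt si1.
rewrite -si1 modnn => i0; move: si1 si; rewrite -i0.
by case: s {s0 s_uniq s_edge i_lt s_next} => [|a [|b s']] //= _ ->.
Qed.

Lemma cycle_avoiding_node1_spread s : is_cycle S s ->
  (forall i, (i < size s)%N -> nth (@node1 R n) s i <> @node1 R n) ->
  exists sigma y0, forall t, exists i j,
    traj S sigma y0 t i 0 - traj S sigma y0 t j 0 = 2.
Proof.
move=> [s0 [s_nodes [_ s_edge]]] s_no1.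
pose N i := nth (@node1 R n) s (i %% size s).
have N_face i : exists2 F, proper_open_face F & N i = face_node F.
  have i_lt := ltn_pmod i s0.
  by case: (s_nodes _ i_lt) => [/(s_no1 _ i_lt)|[F [F_open eF]]] //; exists F.
have step i : exists k, forall y, in_node (N i) y -> in_node (N i.+1) (S k *m y).
  have [F1 F1_open e1] := N_face i; have [F2 F2_open e2] := N_face i.+1.
  rewrite e1 e2; apply: gedge_in_node => //; rewrite -e1 -e2 /N.
  have -> : (i.+1 %% size s = (i %% size s).+1 %% size s)%N.
    by rewrite -[i.+1]addn1 -[(i %% size s).+1]addn1 modnDml.
  exact/s_edge/ltn_pmod.
have [sigma sigmaP] := choice step.
have [F0 F0_open e0] := N_face 0%N.
have [y0 F0y0] := proper_open_face_nonempty F0_open.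
exists sigma, y0 => t; have [F F_open eF] := N_face t.
apply: (in_face_node_spread F_open); rewrite -eF.
by elim: t {F F_open eF} => [|t IH]; [rewrite e0; exists F0 => //; left | exact: sigmaP].
Qed.

Lemma convergence_only_node1_cycle :
  (forall x0 sigma, converges_to_multiple_of_ones (traj S sigma x0)) ->
  only_cycle_is_node1_loop S.
Proof.
move=> S_cvg s s_cycle.
have [[i [i_lt si]]|s_no1] :=
  pselect (exists i, (i < size s)%N /\ nth (@node1 R n) s i = @node1 R n).
  exact: cycle_through_node1 s_cycle i_lt si.
have [|sigma [y0 spread]] := cycle_avoiding_node1_spread s_cycle.
  by move=> i i_lt si; apply: s_no1; exists i.
by case: (spread_not_converge spread (S_cvg y0 sigma)).
Qed.

End Converse.

Unset Implicit Arguments.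

Theorem theorem1 (R : realType) (n m : nat) (S : 'I_m -> 'M[R]_n) :
  (2 <= n)%N ->
  (forall k, S k *m ones R n = ones R n) ->
  (forall k (x : 'cV[R]_n), pnorm (S k *m x) <= pnorm x) ->
  ((forall (x0 : 'cV[R]_n) (sigma : nat -> 'I_m),
      converges_to_multiple_of_ones (traj S sigma x0))
   <-> only_cycle_is_node1_loop S).
Proof.
move=> n2 S_ones S_nonexp; split; first exact: convergence_only_node1_cycle.
move=> S_acyclic x0 sigma.
exact: traj_converges S_ones S_nonexp S_acyclic sigma x0 (Ordinal (ltnW n2)).
Qed.
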